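(* Let $k$ be a positive integer, let $D$ be a digraph containing no subdivision of $B(k,1;k)$, let $\mathcal{C}$ be a $k$-suitable collection of directed cycles of $D$, and let $C_1\in\mathcal{C}$. Then the digraph $I^+(C_1)$ contains no directed cycle.
   Context: A collection $\mathcal{C}$ of directed cycles is $k$-suitable if every cycle of $\mathcal{C}$ has length at least $8k$ and for any two distinct $C_i,C_j\in\mathcal{C}$, the set $V(C_i)\cap V(C_j)$ is either empty or the vertex set of a directed path $P_{i,j}$ with at most $k$ vertices which is a subpath of both $C_i$ and $C_j$; $s_{i,j}$, $t_{i,j}$ denote the initial and terminal vertices of $P_{i,j}$. For a directed cycle $C$ and vertices $a,b$ on it, $C[a,b]$ is the directed subpath of $C$ from $a$ to $b$, and $C]a,b]$ denotes it with $a$ removed. $\mathcal{C}\cap C_1$ denotes the set of cycles of $\mathcal{C}$ other than $C_1$ sharing a vertex with $C_1$. For $C_j\in\mathcal{C}\cap C_1$, let $t(Q_j)$ be the vertex of $C_j$ with $C_j[t_{1,j},t(Q_j)]$ of length $3k$, and $Q^+_j=C_j]t_{1,j},t(Q_j)]$. $I^+(C_1)=\bigcup_{C_j\in\mathcal{C}\cap C_1}Q^+_j$ (union of digraphs). A digraph contains a subdivision of $B(k_1,k_2;k_3)$ if there exist distinct vertices $u,w$ and three pairwise internally vertex-disjoint directed paths: two from $u$ to $w$ of lengths at least $k_1$ and $k_2$, and one from $w$ to $u$ of length at least $k_3$. *)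

From mathcomp Require Import all_boot.
Set Implicit Arguments.
Unset Strict Implicit.
Unset Printing Implicit Defensive.

Section Digraphs.
Variable V : finType.

Fixpoint ppath (A : V -> V -> Prop) (x : V) (s : seq V) : Prop :=
  match s with
  | [::] => True
  | y :: s' => A x y /\ ppath A y s'
  end.

(* A directed cycle of the digraph with arc relation A, given by its cyclic
   sequence of (pairwise distinct, at least 2) vertices; its length is size c. *)
Definition dicycle (A : V -> V -> Prop) (c : seq V) : Prop :=
  match c with
  | [::] => False
  | x :: s => uniq c /\ 2 <= size c /\ ppath A x (rcons s x)
  end.

(* Directed path x :: s in (V,E), from x to [last x s], of length [size s]. *)
Definition dipath (E : rel V) (x : V) (s : seq V) : bool :=
  uniq (x :: s) && path E x s.

Definition interior (x : V) (s : seq V) : seq V := behead (belast x s).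

Definition disj (s1 s2 : seq V) : Prop := forall v, v \in s1 -> v \notin s2.

Definition has_B_subdiv (E : rel V) (k1 k2 k3 : nat) : Prop :=
  exists (u w : V) (s1 s2 s3 : seq V),
    [/\ u != w,
        [/\ dipath E u s1, last u s1 = w & k1 <= size s1],
        [/\ dipath E u s2, last u s2 = w & k2 <= size s2],
        [/\ dipath E w s3, last w s3 = u & k3 <= size s3] &
        [/\ s1 != s2,
            disj (interior u s1) (interior u s2),
            disj (interior u s1) (interior w s3) &
            disj (interior u s2) (interior w s3)]].

Definition subpath_of_cycle (P c : seq V) : Prop :=
  exists n, prefix P (rot n c).

Definition is_Pij (ci cj P : seq V) : Prop :=
  [/\ P != [::], subpath_of_cycle P ci, subpath_of_cycle P cj &
      forall v, v \in P <-> (v \in ci /\ v \in cj)].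

Definition k_suitable (E : rel V) (k : nat) (I : finType) (C : I -> seq V) : Prop :=
  (forall i, dicycle (fun u v => E u v) (C i) /\ 8 * k <= size (C i)) /\
  (forall i j, i != j ->
     (forall v, v \in C i -> v \notin C j) \/
     (exists P, is_Pij (C i) (C j) P /\ size P <= k)).

Definition cyc_from (c : seq V) (a : V) : seq V := rot (index a c) c.

Definition seq_arc (s : seq V) (u v : V) : Prop :=
  exists s1 s2, s = s1 ++ u :: v :: s2.

(* Q^+_j = C_j]t_{1,j}, t(Q_j)] as a vertex sequence: the 3k vertices
   following t on C_j. *)
Definition Qplus (k : nat) (cj : seq V) (t : V) : seq V :=
  take (3 * k) (behead (cyc_from cj t)).

(* Arc relation of the digraph I^+(C_{i1}) = union of the Q^+_j over the
   cycles C_j (j != i1) meeting C_{i1}; t_{1,j} is the last vertex of P_{1,j}. *)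
Definition Iplus_arc (k : nat) (I : finType) (C : I -> seq V) (i1 : I)
    (u v : V) : Prop :=
  exists j, [/\ j != i1, (exists x, x \in C i1 /\ x \in C j) &
    exists (s : V) (P : seq V),
      is_Pij (C i1) (C j) (s :: P) /\
      seq_arc (Qplus k (C j) (last s P)) u v].

End Digraphs.

From mathcomp Require Import all_boot zify.
Set Implicit Arguments. Unset Strict Implicit. Unset Printing Implicit Defensive.

(* Suppose I^+(C_1) contains a directed cycle.  Each of its vertices x lies
   on some Q^+_j, at distance p from t_{1,j}; choose x with p minimal and let
   z, on Q^+_l, be its predecessor on the cycle.  By minimality z is not the
   predecessor of x on C_j, so j <> l and x is the first vertex of P_{j,l}:
   the arcs of C_j and C_l leading to x avoid the other cycle.  The arc of
   C_1 from t_{1,l} to t_{1,j} followed by C_j up to x is then an ear of C_l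
   from t_{1,l} to x, and symmetrically with j and l exchanged; as C_1 has
   length at least 8k one of the two ears has length at least k, and an ear
   of length k on a cycle of length 8k yields a subdivision of B(k,1;k). *)

(* The same [size s] may reach [lia] through different coercions to the
   carrier type, which it would treat as distinct atoms. *)
Ltac size_lia :=
  repeat match goal with
  | H : is_true (_ <= _) |- _ => revert H
  | H : @eq nat _ _ |- _ => revert H
  end;
  rewrite ?[size (_ :: _)]/=;
  repeat match goal with |- context [@size ?T ?s] =>
    let N := fresh "N" in set N := @size T s end;
  intros; lia.

Lemma belast_traject (T : Type) (f : T -> T) x n :
  belast x (traject f (f x) n) = traject f x n.
Proof. by elim: n x => //= n IHn x; rewrite IHn. Qed.

Section CycleSuccessor.
Variables (T : eqType) (c : seq T).
Hypothesis c_uniq : uniq c.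
Implicit Types (a b y : T) (m n q : nat).

Lemma rot_next_traject n0 a s : rot n0 c = a :: s ->
  rcons s a = traject (next c) (next c a) (size c).
Proof.
move=> Drot; have : fcycle (next c) (rot n0 c).
  by rewrite -(eq_fcycle (next_rot n0 c_uniq)) cycle_next ?rot_uniq.
by rewrite Drot /= => /fpathE ->; rewrite size_rcons -(size_rot n0 c) Drot.
Qed.

Lemma traject_next_size a : a \in c ->
  traject (next c) a (size c) = rot (index a c) c.
Proof.
move=> ac; rewrite -belast_traject -(rot_next_traject (rot_index ac)).
by rewrite belast_rcons (rot_index ac).
Qed.

Lemma iter_next_size a : a \in c -> iter (size c) (next c) a = a.
Proof.
move=> ac; rewrite -(last_traject (next c) a) -(rot_next_traject (rot_index ac)).
exact: last_rcons.
Qed.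

Lemma mem_iter_next a m : a \in c -> iter m (next c) a \in c.
Proof. by move=> ac; elim: m => //= m IHm; rewrite mem_next. Qed.

Lemma traject_next_sub a n : a \in c -> {subset traject (next c) a n <= c}.
Proof. by move=> ac y /trajectP[i _ ->]; apply: mem_iter_next. Qed.

Lemma iter_next_wrap a m : a \in c -> iter (size c + m) (next c) a = iter m (next c) a.
Proof. by move=> ac; rewrite addnC iterD iter_next_size. Qed.

Lemma traject_next_uniq a n : a \in c -> n <= size c -> uniq (traject (next c) a n).
Proof.
move=> ac le_n; rewrite -(take_traject _ _ le_n) traject_next_size //.
by rewrite take_uniq ?rot_uniq.
Qed.

Lemma iter_next_inj a m1 m2 : a \in c -> m1 < size c -> m2 < size c ->
  iter m1 (next c) a = iter m2 (next c) a -> m1 = m2.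
Proof.
move=> ac lt1 lt2; rewrite -(nth_traject _ lt1) -(nth_traject _ lt2) => /eqP.
by rewrite nth_uniq ?size_traject ?traject_next_uniq // => /eqP.
Qed.

Lemma iter_next_onto a y : a \in c -> y \in c ->
  exists2 m, m < size c & y = iter m (next c) a.
Proof. by move=> ac; rewrite -(mem_rot (index a c)) -traject_next_size // => /trajectP. Qed.

Section Meet.
Variables (c' : seq T) (b : T) (q : nat).
Hypothesis b_in : b \in c.
Hypothesis meet : {in c, forall y, (y \in c') = (y \in traject (next c) b q)}.

Lemma iter_next_notin m : q <= m < size c -> iter m (next c) b \notin c'.
Proof.
case/andP=> le_qm lt_m; rewrite meet ?mem_iter_next //.
apply/trajectP=> -[i lt_iq /(iter_next_inj b_in lt_m) eq_mi]; lia.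
Qed.

(* An arc ending outside [c'] cannot wrap around past [b]: it would end on
   the common path. *)
Lemma iter_next_notin_upto e m : e < size c + q ->
  iter e (next c) b \notin c' -> q <= m <= e -> iter m (next c) b \notin c'.
Proof.
move=> lt_e notin_e /andP[le_qm le_me].
case: (ltnP e (size c)) => [lt_e_size | le_size_e].
  by apply: iter_next_notin; lia.
move: notin_e; rewrite -(subnKC le_size_e) iter_next_wrap // meet ?mem_iter_next //.
by case/negP; apply/trajectP; exists (e - size c); first lia.
Qed.

End Meet.

End CycleSuccessor.

Lemma common_traject_prev (T : eqType) (c c' : seq T) b q x :
  uniq c -> uniq c' -> traject (next c) b q = traject (next c') b q ->
  x \in traject (next c) b q -> x != b -> prev c x = prev c' x.
Proof.
move=> Uc Uc' Dtraj /trajectP[[|i] lt_iq ->]; rewrite ?eqxx // => _.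
have Diter m : m < q -> iter m (next c) b = iter m (next c') b.
  by move=> lt_mq; rewrite -!(nth_traject _ lt_mq) Dtraj.
by rewrite [in RHS]Diter // !iterS (prev_next Uc) (prev_next Uc') Diter // ltnW.
Qed.

Section DigraphPaths.
Variables (V : finType) (E : rel V).
Implicit Types (c ci cj s P : seq V) (b u v w x : V).

Lemma interior_traject (f : V -> V) x n :
  interior x (traject f (f x) n) = traject f (f x) n.-1.
Proof. by rewrite /interior belast_traject; case: n. Qed.

Lemma interior_rcons x s y : interior x (rcons s y) = s.
Proof. by rewrite /interior belast_rcons. Qed.

Lemma subpath_traject c b P : uniq c -> subpath_of_cycle (b :: P) c ->
  b :: P = traject (next c) b (size P).+1.
Proof.
move=> Uc [n0 pre]; have := size_prefix pre; rewrite size_rot /= => lt_P.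
case/prefixP: pre => s2 Drot.
have := congr1 (take (size P)) (rot_next_traject Uc Drot).
by rewrite rcons_cat take_size_cat // take_traject 1?ltnW // => <-.
Qed.

Lemma path_traject_next c a n : cycle E c -> a \in c ->
  path E a (traject (next c) (next c a) n).
Proof.
move=> cyc; elim: n a => //= n IHn a ac.
by rewrite (next_cycle cyc ac) IHn ?mem_next.
Qed.

Lemma dipath_traject_next c a n : uniq c -> cycle E c -> a \in c -> n < size c ->
  dipath E a (traject (next c) (next c a) n).
Proof.
move=> Uc cyc ac lt_n; rewrite /dipath path_traject_next // andbT.
exact: (traject_next_uniq Uc ac lt_n).
Qed.

Lemma seq_arc_traject (f : V -> V) x n u v : seq_arc (traject f x n) u v ->
  exists2 i, i.+1 < n & u = iter i f x /\ v = f u.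
Proof.
case=> s1 [s2 Dtraj]; have size_n := size_traject f x n.
rewrite Dtraj size_cat /= in size_n.
exists (size s1); first lia.
have nth_s1 i : i < 2 -> nth x (traject f x n) (size s1 + i) = iter (size s1 + i) f x.
  by move=> lt_i2; apply: nth_traject; lia.
move: (nth_s1 0 erefl) (nth_s1 1 erefl).
rewrite Dtraj !nth_cat !addn0 ltnn subnn ltnNge leq_addr /= addnC addnK.
by move=> -> /= ->.
Qed.

Lemma Qplus_traject c k t : uniq c -> t \in c -> 3 * k < size c ->
  Qplus k c t = traject (next c) (next c t) (3 * k).
Proof.
move=> Uc tc lt_3k; rewrite /Qplus /cyc_from -traject_next_size //.
by rewrite -(prednK (leq_ltn_trans (leq0n _) lt_3k)) take_traject //; size_lia.
Qed.

Lemma ppath_path x s : ppath (fun u v => E u v) x s -> path E x s.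
Proof. by elim: s x => //= y s IHs x [-> /IHs]. Qed.

Lemma dicycle_cycle c : dicycle (fun u v => E u v) c -> uniq c /\ cycle E c.
Proof. by case: c => // x s [Uc [_ /ppath_path]]. Qed.

Lemma ppath_pred (A : V -> V -> Prop) z r v : ppath A z r -> v \in r ->
  exists2 y, y \in z :: r & A y v.
Proof.
elim: r z => //= y r IHr z [Azy path_r]; rewrite inE.
case/orP=> [/eqP -> | /(IHr _ path_r)[w w_in Awv]]; first by exists z; rewrite ?mem_head.
by exists w; rewrite // inE w_in orbT.
Qed.

Lemma dicycle_pred (A : V -> V -> Prop) c v : dicycle A c -> v \in c ->
  exists2 z, z \in c & A z v.
Proof.
case: c => // x s [_ [_ path_s]]; rewrite -mem_rcons => /(ppath_pred path_s)[z z_in Azv].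
exists z => //; move: z_in; rewrite inE mem_rcons => /orP[/eqP -> |//].
exact: mem_head.
Qed.

Lemma dipath_cat u s1 s2 : dipath E u s1 -> dipath E (last u s1) s2 ->
  {in u :: s1, forall v, v \notin s2} -> dipath E u (s1 ++ s2).
Proof.
move=> /andP[U1 P1] /andP[/= /andP[_ U2] P2] out.
rewrite /dipath -cat_cons cat_uniq U1 U2 cat_path P1 P2 !andbT.
by apply/hasPn=> v v_in; apply/negP=> /out; rewrite v_in.
Qed.

Lemma subpath_uniq c P : uniq c -> subpath_of_cycle P c -> uniq P.
Proof. by move=> Uc [n0 /prefix_uniq]; rewrite rot_uniq; apply. Qed.

Lemma Pij_sym ci cj P : is_Pij ci cj P -> is_Pij cj ci P.
Proof. by case=> P_nil sub_i sub_j meet; split=> // v; rewrite meet; split=> -[]. Qed.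

Lemma Pij_meet ci cj P : is_Pij ci cj P -> {in cj, forall y, (y \in ci) = (y \in P)}.
Proof.
case=> _ _ _ meet y y_in; apply/idP/idP=> [y_in' | /meet[] //].
by apply/meet; split.
Qed.

Lemma Pij_traject ci cj b P : uniq cj -> is_Pij ci cj (b :: P) ->
  b :: P = traject (next cj) b (size P).+1.
Proof. by move=> Uc [_ _ sub _]; apply: subpath_traject. Qed.

Lemma Pij_head_meet ci cj b P : uniq cj -> is_Pij ci cj (b :: P) ->
  b \in cj /\ {in cj, forall y, (y \in ci) = (y \in traject (next cj) b (size P).+1)}.
Proof.
move=> Uc pij; rewrite -(Pij_traject Uc pij); split; last exact: Pij_meet pij.
by have [_ _ _ /(_ b)[/(_ (mem_head _ _))[]]] := pij.
Qed.

Lemma Pij_last ci cj b P : uniq cj -> is_Pij ci cj (b :: P) ->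
  last b P = iter (size P) (next cj) b.
Proof. by move=> Uc /(Pij_traject Uc)[{1}->]; rewrite last_traject. Qed.

Lemma Pij_last_notin_upto ci cj b P e m : uniq cj -> is_Pij ci cj (b :: P) ->
  e < size cj -> iter e (next cj) (last b P) \notin ci ->
  0 < m <= e -> iter m (next cj) (last b P) \notin ci.
Proof.
move=> Uc pij lt_e; rewrite (Pij_last Uc pij) -!iterD => out_e range_m.
have [b_in meet] := Pij_head_meet Uc pij.
by apply: (iter_next_notin_upto Uc b_in meet _ out_e); size_lia.
Qed.

Lemma Pij_last_notin ci cj b P m : uniq cj -> is_Pij ci cj (b :: P) ->
  0 < m -> m + size P < size cj -> iter m (next cj) (last b P) \notin ci.
Proof.
move=> Uc pij m_gt0 lt_m; rewrite (Pij_last Uc pij) -iterD.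
have [b_in meet] := Pij_head_meet Uc pij.
by apply: (iter_next_notin Uc b_in meet); size_lia.
Qed.

(* Branch vertices [u] and [w]: the ear and the short arc of [c] run from
   [u] to [w], the long arc of [c] returns to [u]. *)
Lemma has_B_subdiv_ear c s u n k1 k3 :
  uniq c -> cycle E c -> u \in c -> 0 < n < size c -> k3 <= size c - n ->
  s != [::] -> {in s, forall v, v \notin c} ->
  dipath E u (rcons s (iter n (next c) u)) -> k1 <= (size s).+1 ->
  has_B_subdiv E k1 1 k3.
Proof.
move=> Uc cyc uc /andP[n_gt0 lt_n] le_k3 s_nil s_out ear le_k1.
set w := iter n (next c) u.
have wc : w \in c := mem_iter_next _ uc.
have Dw : iter (size c - n) (next c) w = u by rewrite /w -iterD subnK ?iter_next_size // ltnW.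
have in_c v x m : x \in c -> v \in interior x (traject (next c) (next c x) m) -> v \in c.
  by move=> xc; rewrite interior_traject; apply: traject_next_sub; rewrite mem_next.
exists u, w, (rcons s w), (traject (next c) (next c u) n),
  (traject (next c) (next c w) (size c - n)); split.
- by apply/eqP=> /(iter_next_inj Uc uc (leq_ltn_trans (leq0n n) lt_n) lt_n); lia.
- by rewrite last_rcons size_rcons.
- by rewrite dipath_traject_next // last_traject size_traject.
- rewrite dipath_traject_next // ?last_traject ?size_traject //; lia.
- split.
  + case: s s_nil s_out {ear le_k1} => // v s' _ s_out.
    rewrite -(prednK n_gt0) /=; apply/eqP=> -[Dv _].
    by have := s_out v (mem_head v s'); rewrite Dv mem_next uc.
  + by rewrite interior_rcons => v /s_out; apply: contra; apply: in_c.
  + by rewrite interior_rcons => v /s_out; apply: contra; apply: in_c.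
  + rewrite !interior_traject => v /trajectP[i lt_i ->]; apply/trajectP=> -[j lt_j].
    rewrite -!iterSr /w -iterD => Deq; suff: i.+1 = j.+1 + n by lia.
    apply: (iter_next_inj Uc uc) Deq.
    all: size_lia.
Qed.

End DigraphPaths.

Section Suitable.
Variables (V : finType) (E : rel V) (k : nat) (I : finType) (C : I -> seq V).
Hypothesis C_suitable : k_suitable E k C.
Implicit Types (i j l : I) (b t w x y : V).

Lemma suitable_uniq j : uniq (C j).
Proof. by have [/(_ j)[/dicycle_cycle[]]] := C_suitable. Qed.

Lemma suitable_cycle j : cycle E (C j).
Proof. by have [/(_ j)[/dicycle_cycle[]]] := C_suitable. Qed.

Lemma suitable_size j : 8 * k <= size (C j).
Proof. by have [/(_ j)[]] := C_suitable. Qed.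

Lemma Pij_size i j P : i != j -> is_Pij (C i) (C j) P -> size P <= k.
Proof.
move=> ij pij; have [P_nil sub_i _ meet] := pij.
have [_ /(_ i j ij)[disj | [P' [pij' le_P'k]]]] := C_suitable.
  case: P P_nil meet {pij sub_i} => // b P _ /(_ b)[/(_ (mem_head b P))[bi bj] _].
  by move: (disj b bi); rewrite bj.
have [_ sub'_i _ meet'] := pij'.
rewrite (perm_size (uniq_perm (subpath_uniq (suitable_uniq i) sub_i)
                              (subpath_uniq (suitable_uniq i) sub'_i) _)) //.
by move=> v; apply/idP/idP=> [/meet/meet' | /meet'/meet].
Qed.

(* Distinct predecessors force [x] to be the first vertex of the common path
   [P_{j,l}], which only continues forward from [x]. *)
Lemma notin_before_meet j l w x n :
  j != l -> w \in C j -> x = iter n (next (C j)) w -> x \in C l ->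
  prev (C j) x != prev (C l) x -> n + k <= size (C j) ->
  forall m, m < n -> iter m (next (C j)) w \notin C l.
Proof.
move=> jl wj Dx xl prev_x le_nk m lt_mn.
have xj : x \in C j by rewrite Dx mem_iter_next.
have [_ /(_ j l jl)[disj | [[|b P] [pij le_Pk]]]] := C_suitable.
- by move: (disj x xj); rewrite xl.
- by case: pij.
have [bj meet_j] := Pij_head_meet (suitable_uniq j) (Pij_sym pij).
have x_in : x \in traject (next (C j)) b (size P).+1 by rewrite -meet_j.
have Dxb : x = b.
  apply/eqP; apply: contraNT prev_x => xb; apply/eqP.
  apply: common_traject_prev (suitable_uniq j) (suitable_uniq l) _ x_in xb.
  rewrite -(Pij_traject (suitable_uniq j) (Pij_sym pij)).
  by rewrite -(Pij_traject (suitable_uniq l) pij).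
have -> : iter m (next (C j)) w = iter (size (C j) - n + m) (next (C j)) x.
  by rewrite Dx -iterD -(iter_next_wrap (suitable_uniq j) _ wj); congr iter; size_lia.
rewrite Dxb; apply: (iter_next_notin (suitable_uniq j) bj meet_j); size_lia.
Qed.

Section Terminal.
Hypothesis k_gt0 : 0 < k.
Variable i1 : I.

Definition terminal j t :=
  j != i1 /\ exists b P, is_Pij (C i1) (C j) (b :: P) /\ last b P = t.

Lemma terminal_mem j t : terminal j t -> t \in C i1 /\ t \in C j.
Proof. by case=> _ [b [P [[_ _ _ meet] <-]]]; apply/meet/mem_last. Qed.

Lemma terminal_succ_notin j t m : terminal j t -> 0 < m <= 7 * k ->
  iter m (next (C j)) t \notin C i1.
Proof.
case=> ji [b [P [pij <-]]] /andP[m_gt0 le_m].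
rewrite eq_sym in ji; have le_Pk := Pij_size ji pij; have le_size := suitable_size j.
by apply: (Pij_last_notin (suitable_uniq j) pij m_gt0); size_lia.
Qed.

Lemma terminal_arc_notin l t d : terminal l t -> d < size (C i1) ->
  iter d (next (C i1)) t \notin C l ->
  forall m, 0 < m <= d -> iter m (next (C i1)) t \notin C l.
Proof.
case=> _ [b [P [pij <-]]] lt_d out_d m.
exact: Pij_last_notin_upto (suitable_uniq i1) (Pij_sym pij) lt_d out_d.
Qed.

Lemma Iplus_arcP u v : Iplus_arc k C i1 u v -> exists j t m,
  [/\ terminal j t, 0 < m < 3 * k, u = iter m (next (C j)) t & v = next (C j) u].
Proof.
case=> j [ji _ [b [P [pij arc]]]].
have term : terminal j (last b P) by split=> //; exists b, P.
have [_ tj] := terminal_mem term.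
move: arc; rewrite Qplus_traject ?suitable_uniq //; last first.
  by have := suitable_size j; size_lia.
case/seq_arc_traject=> m lt_m [Du Dv]; exists j, (last b P), m.+1.
by split=> //; rewrite ?Du ?iterSr //; lia.
Qed.

(* The ear runs from [tl] along [C i1] to [tj] and then along [C j] to
   [x]; it meets [C l] only at its two ends. *)
Lemma B_subdiv_route j l tj tl x p n d :
  terminal j tj -> terminal l tl ->
  x = iter p (next (C j)) tj -> x = iter n (next (C l)) tl ->
  0 < p <= 3 * k -> 0 < n <= 3 * k ->
  (forall m, m < p -> iter m (next (C j)) tj \notin C l) ->
  tj = iter d (next (C i1)) tl -> 0 < d < size (C i1) -> k <= d + p ->
  has_B_subdiv E k 1 k.
Proof.
move=> Tj Tl Dxj Dxl /andP[p_gt0 le_p] /andP[n_gt0 le_n] before_x Dtj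
  /andP[d_gt0 lt_d] le_k.
have [tl1 tll] := terminal_mem Tl.
have [_ tjj] := terminal_mem Tj.
have size_j := suitable_size j; have size_l := suitable_size l.
have arc_out : forall m, 0 < m <= d -> iter m (next (C i1)) tl \notin C l.
  by apply: (terminal_arc_notin Tl lt_d); rewrite -Dtj; apply: before_x 0 p_gt0.
set s1 := traject (next (C i1)) (next (C i1) tl) d.
set s2 := traject (next (C j)) (next (C j) tj) p.-1.
have Dear : rcons (s1 ++ s2) x = s1 ++ traject (next (C j)) (next (C j) tj) p.
  by rewrite rcons_cat Dxj /s2; case: (p) p_gt0 => // p' _; rewrite trajectSr -iterSr.
apply: (has_B_subdiv_ear (s := s1 ++ s2) (n := n) (suitable_uniq l) (suitable_cycle l) tll).
- size_lia.
- size_lia.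
- by rewrite -size_eq0 size_cat size_traject; lia.
- move=> v; rewrite mem_cat => /orP[] /trajectP[m lt_m ->]; rewrite -iterSr.
    by apply: arc_out; lia.
  by apply: before_x; lia.
- rewrite -Dxl Dear; apply: dipath_cat.
  + exact: dipath_traject_next (suitable_uniq i1) (suitable_cycle i1) tl1 lt_d.
  + rewrite /s1 last_traject -Dtj.
    by apply: dipath_traject_next (suitable_uniq j) (suitable_cycle j) tjj _; size_lia.
  + move=> v v_in; apply/negP=> /trajectP[m lt_m Dv].
    have v1 : v \in C i1 by apply: (traject_next_sub (n := d.+1) tl1).
    by move: v1; rewrite Dv -iterSr; apply/negP/terminal_succ_notin => //; lia.
- by rewrite size_cat !size_traject; lia.
Qed.

Lemma B_subdiv_at_merge j l tj tl x p n :
  terminal j tj -> terminal l tl ->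
  x = iter p (next (C j)) tj -> x = iter n (next (C l)) tl ->
  0 < p <= 3 * k -> 0 < n <= 3 * k -> prev (C j) x != prev (C l) x ->
  has_B_subdiv E k 1 k.
Proof.
move=> Tj Tl Dxj Dxl p_range n_range prev_x.
have [tj1 tjj] := terminal_mem Tj; have [tl1 tll] := terminal_mem Tl.
have xj : x \in C j by rewrite Dxj mem_iter_next.
have xl : x \in C l by rewrite Dxl mem_iter_next.
have jl : j != l by apply: contraNneq prev_x => ->.
have size_j := suitable_size j; have size_l := suitable_size l.
have size_1 := suitable_size i1.
have before_xj : forall m, m < p -> iter m (next (C j)) tj \notin C l.
  by apply: (notin_before_meet jl tjj Dxj xl prev_x); size_lia.
rewrite eq_sym in jl; rewrite eq_sym in prev_x.
have before_xl : forall m, m < n -> iter m (next (C l)) tl \notin C j.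
  by apply: (notin_before_meet jl tll Dxl xj prev_x); size_lia.
have [d lt_d Dtj] := iter_next_onto (suitable_uniq i1) tl1 tj1.
have d_gt0 : 0 < d.
  case: d Dtj {lt_d} => // Dtj; case/andP: p_range => p_gt0 _.
  by have := before_xj 0 p_gt0; rewrite Dtj tll.
case: (leqP k (d + p)) => [le_k | lt_k].
  by apply: (B_subdiv_route Tj Tl Dxj Dxl p_range n_range before_xj Dtj _ le_k); rewrite d_gt0.
apply: (B_subdiv_route Tl Tj Dxl Dxj n_range p_range before_xl (d := size (C i1) - d)).
- by rewrite Dtj -iterD subnK ?iter_next_size ?suitable_uniq // ltnW.
- size_lia.
- size_lia.
Qed.

Lemma Iplus_cycle_B_subdiv c : dicycle (Iplus_arc k C i1) c -> has_B_subdiv E k 1 k.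
Proof.
move=> cyc.
have pred_in x : x \in c -> exists l tl n, [/\ terminal l tl, 0 < n < 3 * k,
    iter n (next (C l)) tl \in c & x = iter n.+1 (next (C l)) tl].
  case/(dicycle_pred cyc)=> z z_in /Iplus_arcP[l [tl [n [Tl n_range Dz Dx]]]].
  by exists l, tl, n; split; rewrite // -?Dz // Dx Dz.
pose reach p := exists x j t,
  [/\ x \in c, terminal j t, 0 < p <= 3 * k & x = iter p (next (C j)) t].
suff reach_B p : reach p -> has_B_subdiv E k 1 k.
  have [x0 x0_in] : exists x0, x0 \in c.
    by case: (c) cyc => [[] | x0 s] _; exists x0; rewrite mem_head.
  have [l [tl [n [Tl n_range _ Dx0]]]] := pred_in x0 x0_in.
  by apply: (reach_B n.+1); exists x0, l, tl; split=> //; lia.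
elim/ltn_ind: p => p IHp [x [j [tj [xc Tj p_range Dx]]]].
have [l [tl [n [Tl n_range z_in Dxl]]]] := pred_in x xc.
have [p_gt0 _] := andP p_range.
have prev_xl : prev (C l) x = iter n (next (C l)) tl.
  by rewrite Dxl iterS prev_next ?suitable_uniq.
have prev_xj : prev (C j) x = iter p.-1 (next (C j)) tj.
  by rewrite Dx -(prednK p_gt0) iterS prev_next ?suitable_uniq.
case: (eqVneq (prev (C j) x) (prev (C l) x)) => [same | differ]; last first.
  by apply: B_subdiv_at_merge Tj Tl Dx Dxl p_range _ differ; lia.
(* The common predecessor of [x] is closer to the terminal vertex of [j]. *)
case: p IHp p_range Dx prev_xj p_gt0 => [|[|p]] // IHp p_range Dx prev_xj _.
  have [tj1 _] := terminal_mem Tj.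
  have n_range' : 0 < n <= 7 * k by lia.
  by move: (terminal_succ_notin Tl n_range'); rewrite -prev_xl -same prev_xj /= tj1.
apply: (IHp p.+1) => //; exists (prev (C l) x), j, tj.
by rewrite prev_xl; split=> //; [lia | rewrite -prev_xl -same prev_xj].
Qed.

End Terminal.

End Suitable.

Theorem mainTheorem14 (V : finType) (E : rel V) (k : nat)
    (I : finType) (C : I -> seq V) (i1 : I) :
  0 < k ->
  ~ has_B_subdiv E k 1 k ->
  k_suitable E k C ->
  ~ (exists c : seq V, dicycle (Iplus_arc k C i1) c).
Proof.
move=> k_gt0 noB C_suitable [c cyc].
exact/noB/(Iplus_cycle_B_subdiv C_suitable k_gt0 cyc).
Qed.
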